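(* Define $\sigma:\mathbb N\to\mathbb N$ by $$\sigma(n)=\begin{cases}\lfloor(\varphi+1) n-2\rfloor, & n\in R_{1,0},\\ \lfloor\varphi n+2\rfloor, & n\in R_{3,1},\\ \lfloor(\varphi-1) n+2\rfloor, & n\in R_{2,2},\\ \lfloor(\varphi-1) n\rfloor, & n\in R_{2,0}.\end{cases}$$ Then $\sigma$ is an $R_{i,j}$-permutation of $\mathbb N$ of order $6$ (first values $2,3,1,8,11,5,16,4,7,24,\dots$), and its powers are the $R_{i,j}$-permutations $$\sigma^2(n)=\begin{cases}\lfloor\varphi n+2\rfloor, & n\in R_{2,2},\\ \lfloor\varphi n-2\rfloor, & n\in R_{1,0},\\ n, & n\in R_{4,0}\cup R_{3,1},\\ \lfloor(2-\varphi)n+1\rfloor, & n\in R_{3,2},\end{cases}\qquad \sigma^3(n)=\begin{cases}\lfloor\varphi n+2\rfloor, & n\in R_{3,1},\\ \lfloor(\varphi-1)n\rfloor, & n\in R_{4,0},\\ n, & n\in R_{3,2}\cup R_{2,2}\cup R_{1,0},\end{cases}$$ $$\sigma^4(n)=\begin{cases}\lfloor(\varphi+1)n-2\rfloor, & n\in R_{1,0},\\ \lfloor(\varphi-1)n+2\rfloor, & n\in R_{2,2},\\ \lfloor(\varphi-1)n\rfloor, & n\in R_{3,2},\\ n, & n\in R_{4,0}\cup R_{3,1},\end{cases}\qquad \sigma^5(n)=\sigma^{-1}(n)=\begin{cases}\lfloor\varphi n+2\rfloor, & n\in R_{1,1},\\ \lfloor\varphi n-2\rfloor, & n\in R_{1,0},\\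 \lfloor(\varphi-1)n\rfloor, & n\in R_{4,0},\\ \lfloor(2-\varphi)n+1\rfloor, & n\in R_{3,2}.\end{cases}$$
   Context: $\mathbb N=\{1,2,\dots\}$, $\varphi=\frac{1+\sqrt5}{2}$, $F$ the Fibonacci numbers ($F(0)=0,F(1)=F(2)=1$). For $i\in\mathbb Z^{\ge0},j\in\mathbb Z$, $R_{i,j}$ is the range of $n\mapsto F(i+1)\lfloor n\varphi\rfloor+F(i)n-j$, $n\in\mathbb N$. An $R_{i,j}$-permutation is a permutation $\pi$ of $\mathbb N$ defined piecewise on a finite partition of $\mathbb N$ into sets $R_{i,j}$, with $\pi(n)=\lfloor(a\varphi+b)n+c\rfloor$ on each piece for integers $a,b,c$ depending on the piece. Powers denote iterated composition. *)

From Stdlib Require Import Reals ZArith List ClassicalEpsilon.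
Open Scope R_scope.

Definition phi : R := (1 + sqrt 5) / 2.

(* floor as an integer: up x is the unique integer with x < up x <= x + 1 *)
Definition fl (x : R) : Z := (up x - 1)%Z.

Fixpoint fib (n : nat) : Z :=
  match n with
  | O => 0%Z
  | S O => 1%Z
  | S ((S m) as p) => (fib p + fib m)%Z
  end.

Definition inR (i : nat) (j : Z) (m : Z) : Prop :=
  exists n : Z, (1 <= n)%Z /\
    m = (fib (S i) * fl (IZR n * phi) + fib i * n - j)%Z.

(* a piece: the set R_{i,j} on which pi(n) = floor((a phi + b) n + c) *)
Record piece := Piece { p_i : nat; p_j : Z; p_a : Z; p_b : Z; p_c : Z }.

Definition piece_val (p : piece) (n : Z) : Z :=
  fl ((IZR (p_a p) * phi + IZR (p_b p)) * IZR n + IZR (p_c p)).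

Definition piece_set (p : piece) (m : Z) : Prop := inR (p_i p) (p_j p) m.

Definition is_partition (L : list piece) : Prop :=
  (forall p, In p L -> forall m, piece_set p m -> (1 <= m)%Z) /\
  (forall m, (1 <= m)%Z -> exists p, In p L /\ piece_set p m) /\
  (forall k1 k2 d m, (k1 < length L)%nat -> (k2 < length L)%nat -> k1 <> k2 ->
     piece_set (nth k1 L d) m -> ~ piece_set (nth k2 L d) m).

Definition Rij_piecewise (pi : Z -> Z) (L : list piece) : Prop :=
  is_partition L /\
  (forall p, In p L -> forall n, piece_set p n -> pi n = piece_val p n).

Definition perm_N (pi : Z -> Z) : Prop :=
  (forall n, (1 <= n)%Z -> (1 <= pi n)%Z) /\
  (forall n m, (1 <= n)%Z -> (1 <= m)%Z -> pi n = pi m -> n = m) /\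
  (forall m, (1 <= m)%Z -> exists n, (1 <= n)%Z /\ pi n = m).

Definition is_Rij_perm (pi : Z -> Z) : Prop :=
  perm_N pi /\ exists L, Rij_piecewise pi L.

Definition piter (k : nat) (pi : Z -> Z) : Z -> Z := Nat.iter k pi.

Definition dec (P : Prop) : bool :=
  if excluded_middle_informative P then true else false.

(* sigma_perm as defined in the paper (value n outside the four sets: irrelevant,
   since the theorem shows the four sets partition N) *)
Definition sigma_perm (n : Z) : Z :=
  if dec (inR 1 0 n) then fl ((phi + 1) * IZR n - 2)
  else if dec (inR 3 1 n) then fl (phi * IZR n + 2)
  else if dec (inR 2 2 n) then fl ((phi - 1) * IZR n + 2)
  else if dec (inR 2 0 n) then fl ((phi - 1) * IZR n)
  else n.

Definition L1 : list piece :=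
  Piece 1 0 1 1 (-2) :: Piece 3 1 1 0 2 :: Piece 2 2 1 (-1) 2 :: Piece 2 0 1 (-1) 0 :: nil.
Definition L2 : list piece :=
  Piece 2 2 1 0 2 :: Piece 1 0 1 0 (-2) :: Piece 4 0 0 1 0 :: Piece 3 1 0 1 0
  :: Piece 3 2 (-1) 2 1 :: nil.
Definition L3 : list piece :=
  Piece 3 1 1 0 2 :: Piece 4 0 1 (-1) 0 :: Piece 3 2 0 1 0 :: Piece 2 2 0 1 0
  :: Piece 1 0 0 1 0 :: nil.
Definition L4 : list piece :=
  Piece 1 0 1 1 (-2) :: Piece 2 2 1 (-1) 2 :: Piece 3 2 1 (-1) 0 :: Piece 4 0 0 1 0
  :: Piece 3 1 0 1 0 :: nil.
Definition L5 : list piece :=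
  Piece 1 1 1 0 2 :: Piece 1 0 1 0 (-2) :: Piece 4 0 1 (-1) 0 :: Piece 3 2 (-1) 2 1 :: nil.

From Stdlib Require Import Reals ZArith List Lra Lia Zcomplements ClassicalEpsilon.
Import ListNotations.
Open Scope R_scope.

(* Write A n = ⌊nφ⌋ and B n = A n + n ([lower] and [upper]) for the lower and upper
   Wythoff sequences. Their ranges partition ℕ, hence so do the ranges of the five
   compositions B, ABA, AAA, ABB, AAB, and every set R_{i,j} of the statement is a union
   of some of them: R_{1,0} = B(ℕ), R_{1,1} = AA(ℕ), R_{2,0} = AB(ℕ), R_{2,2} = AAA(ℕ), ...
   Each composition is affine in (A n, n), and the floor of (aφ + b) times such a form is
   again such a form, computed by multiplication in ℤ[φ] as long as a bounded error term
   stays within one unit. So every piece of σ and of its powers sends w(n) to w'(n) with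
   the same n: σ permutes the five words as B → ABA → AAA → B and ABB ↔ AAB, and every
   claim reduces to this permutation of order 6. *)

Lemma fl_spec x : IZR (fl x) <= x < IZR (fl x) + 1.
Proof. unfold fl. destruct (archimed x) as [H1 H2]. rewrite minus_IZR. simpl. lra. Qed.

Lemma fl_unique x k : IZR k <= x < IZR k + 1 -> fl x = k.
Proof.
  intros [H1 H2]. unfold fl.
  rewrite <- (tech_up x (k + 1)); [lia | rewrite plus_IZR; simpl; lra ..].
Qed.

Lemma phi_bounds : 1.6180 < phi < 1.61805.
Proof.
  assert (2.2360 < sqrt 5 < 2.2361).
  { split; [rewrite <- (sqrt_square 2.2360) | rewrite <- (sqrt_square 2.2361)];
      try lra; apply sqrt_lt_1; lra. }
  unfold phi. lra.
Qed.

Lemma phi_sq : phi * phi = phi + 1.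
Proof. unfold phi. assert (sqrt 5 * sqrt 5 = 5) by (apply sqrt_sqrt; lra). nra. Qed.

(* Descent: if aφ = b then (b - a)φ = a, and |b - a| = (φ - 1)|a| < |a|. *)
Lemma phi_irrational a b : IZR a * phi = IZR b -> a = 0%Z.
Proof.
  revert b. induction a as [a IH] using Z_lt_abs_induction. intros b E.
  pose proof phi_bounds.
  assert (Hba : IZR (b - a) = IZR a * (phi - 1)) by (rewrite minus_IZR, <- E; ring).
  destruct (Z.eq_dec a 0) as [|Ha]; [assumption | exfalso].
  assert (Hlt : (Z.abs (b - a) < Z.abs a)%Z).
  { destruct (Z_lt_le_dec a 0) as [Hneg | Hpos].
    - assert (IZR a < 0) by (apply IZR_lt; lia).
      assert (IZR a < IZR (b - a) < 0) as [h1 h2] by (rewrite Hba; nra).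
      apply lt_IZR in h1, h2. lia.
    - assert (0 < IZR a) by (apply IZR_lt; lia).
      assert (0 < IZR (b - a) < IZR a) as [h1 h2] by (rewrite Hba; nra).
      apply lt_IZR in h1, h2. lia. }
  assert (Hrot : IZR (b - a) * phi = IZR a).
  { rewrite Hba. replace (IZR a * (phi - 1) * phi) with (IZR a * (phi * phi - phi)) by ring.
    rewrite phi_sq. ring. }
  apply Ha, eq_IZR. rewrite <- Hrot, (IH (b - a)%Z Hlt a Hrot). ring.
Qed.

Definition lower (n : Z) : Z := fl (IZR n * phi).
Definition upper (n : Z) : Z := (lower n + n)%Z.

Lemma lower_frac n : n <> 0%Z -> 0 < IZR n * phi - IZR (lower n) < 1.
Proof.
  intros Hn. destruct (fl_spec (IZR n * phi)) as [H1 H2]. unfold lower.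
  split; [|lra]. destruct (Rle_lt_or_eq_dec _ _ H1) as [h | h]; [lra|].
  exfalso. exact (Hn (phi_irrational n _ (eq_sym h))).
Qed.

Definition affine (p q r n : Z) : Z := (p * lower n + q * n + r)%Z.

(* (aφ + b)(pφ + q) = Pφ + Q in ℤ[φ]. Writing A n = nφ - x with 0 < x < 1, the argument
   of the floor is P·A n + Q n + (1 - x) g₀ + x g₁, with g₀ and g₁ the two quantities
   bounded in the hypotheses. *)
Lemma floor_affine (a b c p q r P Q k n : Z) :
  (1 <= n)%Z -> P = (a * p + a * q + b * p)%Z -> Q = (a * p + b * q)%Z ->
  IZR k <= (IZR a * phi + IZR b) * IZR r + IZR c <= IZR k + 1 ->
  IZR k <= (IZR a * phi + IZR b) * (IZR r - IZR p) + IZR c + IZR P <= IZR k + 1 ->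
  (IZR a * phi + IZR b) * IZR r + IZR c < IZR k + 1 \/
  (IZR a * phi + IZR b) * (IZR r - IZR p) + IZR c + IZR P < IZR k + 1 ->
  fl ((IZR a * phi + IZR b) * IZR (affine p q r n) + IZR c) = affine P Q k n.
Proof.
  intros Hn HP HQ H0 H1 Hstrict. apply fl_unique.
  destruct (lower_frac n) as [Hx0 Hx1]; [lia|].
  set (x := IZR n * phi - IZR (lower n)) in *.
  set (mu := IZR a * phi + IZR b) in *.
  set (g0 := mu * IZR r + IZR c) in *.
  set (g1 := mu * (IZR r - IZR p) + IZR c + IZR P) in *.
  assert (E : mu * IZR (affine p q r n) + IZR c
              = IZR (affine P Q k n) - IZR k + ((1 - x) * g0 + x * g1)).
  { apply Rminus_diag_uniq. unfold affine, g0, g1, mu, x. subst P Q.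
    rewrite !plus_IZR, !mult_IZR, !plus_IZR, !mult_IZR.
    transitivity (IZR a * IZR p * IZR n * (phi * phi - phi - 1)); [ring|].
    rewrite phi_sq. ring. }
  rewrite E. clearbody g0 g1.
  assert (0 <= (1 - x) * (g0 - IZR k)) by (apply Rmult_le_pos; lra).
  assert (0 <= x * (g1 - IZR k)) by (apply Rmult_le_pos; lra).
  split; [lra|].
  destruct Hstrict.
  - assert (0 < (1 - x) * (IZR k + 1 - g0)) by (apply Rmult_lt_0_compat; lra).
    assert (0 <= x * (IZR k + 1 - g1)) by (apply Rmult_le_pos; lra). lra.
  - assert (0 <= (1 - x) * (IZR k + 1 - g0)) by (apply Rmult_le_pos; lra).
    assert (0 < x * (IZR k + 1 - g1)) by (apply Rmult_lt_0_compat; lra). lra.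
Qed.

Ltac floor_side := pose proof phi_bounds;
  first [reflexivity | lia | lra | left; lra | right; lra].

Lemma lower_lower x : (1 <= x)%Z -> lower (lower x) = (lower x + x - 1)%Z.
Proof.
  intros Hx.
  transitivity (fl ((IZR 1 * phi + IZR 0) * IZR (affine 1 0 0 x) + IZR 0)).
  - unfold lower at 1, affine. f_equal. rewrite Z.mul_1_l, Z.mul_0_l, !Z.add_0_r. ring.
  - rewrite (floor_affine 1 0 0 1 0 0 1 1 (-1)); try floor_side. unfold affine. ring.
Qed.

Lemma lower_upper x : (1 <= x)%Z -> lower (upper x) = (2 * lower x + x)%Z.
Proof.
  intros Hx.
  transitivity (fl ((IZR 1 * phi + IZR 0) * IZR (affine 1 1 0 x) + IZR 0)).
  - unfold lower at 1, upper, affine. f_equal. rewrite !Z.mul_1_l, Z.add_0_r. ring.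
  - rewrite (floor_affine 1 0 0 1 1 0 2 1 0); try floor_side. unfold affine. ring.
Qed.

Lemma lower_ge n : (1 <= n)%Z -> (n <= lower n)%Z.
Proof.
  intros Hn. destruct (fl_spec (IZR n * phi)) as [H1 H2]. pose proof phi_bounds.
  apply IZR_le in Hn.
  assert (Hlt : (n - 1 < lower n)%Z) by (apply lt_IZR; rewrite minus_IZR; unfold lower; nra).
  lia.
Qed.

Lemma lower_pos n : (1 <= n)%Z -> (1 <= lower n)%Z.
Proof. intros Hn. pose proof (lower_ge n Hn). lia. Qed.

Lemma upper_pos n : (1 <= n)%Z -> (1 <= upper n)%Z.
Proof. intros Hn. pose proof (lower_ge n Hn). unfold upper. lia. Qed.

Lemma lower_lt n m : (n < m)%Z -> (lower n < lower m)%Z.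
Proof.
  intros H. destruct (fl_spec (IZR n * phi)) as [H1 H2].
  destruct (fl_spec (IZR m * phi)) as [H3 H4]. pose proof phi_bounds.
  assert (IZR n + 1 <= IZR m) by (rewrite <- plus_IZR; apply IZR_le; lia).
  apply lt_IZR. unfold lower. nra.
Qed.

Lemma lower_inj n m : lower n = lower m -> n = m.
Proof.
  intros H. destruct (Z.lt_total n m) as [h | [h | h]]; trivial;
    apply lower_lt in h; lia.
Qed.

Lemma upper_inj n m : upper n = upper m -> n = m.
Proof.
  unfold upper. intros H. destruct (Z.lt_total n m) as [h | [h | h]]; trivial;
    pose proof (lower_lt _ _ h); lia.
Qed.

Lemma lower_neq_upper x y : (1 <= x)%Z -> (1 <= y)%Z -> lower x <> upper y.
Proof.
  intros Hx Hy E. pose proof phi_bounds. pose proof phi_sq.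
  destruct (lower_frac x) as [Hx0 Hx1]; [lia|].
  destruct (lower_frac y) as [Hy0 Hy1]; [lia|].
  unfold upper in E. set (m := lower x) in *.
  assert (Hm : IZR m = IZR (lower y) + IZR y) by (rewrite E, plus_IZR; reflexivity).
  assert (Ex : IZR x = IZR x * phi * (phi - 1)).
  { replace (IZR x * phi * (phi - 1)) with (IZR x * (phi * phi - phi)) by ring.
    rewrite phi_sq. ring. }
  assert (Ey : IZR y = (IZR y * phi + IZR y) * (2 - phi)).
  { replace ((IZR y * phi + IZR y) * (2 - phi)) with (IZR y * (phi + 2 - phi * phi)) by ring.
    rewrite phi_sq. ring. }
  assert (IZR m * (phi - 1) < IZR x < (IZR m + 1) * (phi - 1)).
  { rewrite Ex. split; apply Rmult_lt_compat_r; lra. }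
  assert (IZR m * (2 - phi) < IZR y < (IZR m + 1) * (2 - phi)).
  { rewrite Ey. split; apply Rmult_lt_compat_r; lra. }
  assert (IZR m < IZR (x + y) < IZR m + 1) as [h1 h2] by (rewrite plus_IZR; nra).
  rewrite <- plus_IZR in h2. apply lt_IZR in h1, h2. lia.
Qed.

(* With n = ⌊(m + 1)/φ⌋ = ⌊(m + 1)(φ - 1)⌋, either m = A n or m = B (m - n). *)
Lemma lower_or_upper m : (1 <= m)%Z ->
  (exists k, (1 <= k)%Z /\ m = lower k) \/ (exists k, (1 <= k)%Z /\ m = upper k).
Proof.
  intros Hm. pose proof phi_bounds. pose proof phi_sq.
  assert (HmR : 1 <= IZR m) by (apply IZR_le; lia).
  set (n := fl (IZR (m + 1) * (phi - 1))).
  destruct (fl_spec (IZR (m + 1) * (phi - 1))) as [Hn0 Hn1]. fold n in Hn0, Hn1.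
  rewrite plus_IZR in Hn0, Hn1.
  assert (Hn : (0 < n)%Z) by (apply lt_IZR; nra).
  assert (Hup : IZR n * phi < IZR m + 1).
  { assert (Hle : IZR n * phi <= IZR m + 1) by nra.
    destruct (Rle_lt_or_eq_dec _ _ Hle) as [h | h]; [exact h | exfalso].
    assert (n = 0%Z) by (apply (phi_irrational n (m + 1)); rewrite plus_IZR; exact h). lia. }
  assert (Hlow : IZR m + 1 < (IZR n + 1) * phi) by nra.
  destruct (Rlt_or_le (IZR m) (IZR n * phi)) as [h | h].
  - left. exists n. split; [lia|]. symmetry. apply fl_unique. lra.
  - right. exists (m - n)%Z.
    assert (hs : IZR n * phi < IZR m).
    { destruct (Rle_lt_or_eq_dec _ _ h) as [h' | h']; [exact h' | exfalso].
      assert (n = 0%Z) by (exact (phi_irrational n m h')). lia. }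
    assert (Hk : IZR n < IZR (m - n) * phi < IZR n + 1) by (rewrite minus_IZR; nra).
    assert (lower (m - n) = n) by (apply fl_unique; lra).
    split; [|unfold upper; lia].
    assert (0 < m - n)%Z by (apply lt_IZR; apply IZR_lt in Hn; nra). lia.
Qed.

Inductive wythoff_word := wB | wABA | wAAA | wABB | wAAB.
Scheme Equality for wythoff_word.

Definition word_val (w : wythoff_word) : Z -> Z :=
  match w with
  | wB => affine 1 1 0
  | wABA => affine 3 2 (-2)
  | wAAA => affine 2 1 (-2)
  | wABB => affine 5 3 0
  | wAAB => affine 3 2 (-1)
  end.

Definition word_comp (w : wythoff_word) (n : Z) : Z :=
  match w with
  | wB => upper n
  | wABA => lower (upper (lower n))
  | wAAA => lower (lower (lower n))
  | wABB => lower (upper (upper n))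
  | wAAB => lower (lower (upper n))
  end.

Lemma word_val_comp w n : (1 <= n)%Z -> word_val w n = word_comp w n.
Proof.
  intros Hn. pose proof (lower_pos n Hn). pose proof (upper_pos n Hn).
  destruct w; cbn [word_val word_comp]; unfold affine.
  - unfold upper. ring.
  - rewrite lower_upper, lower_lower by lia. unfold upper. ring.
  - rewrite !lower_lower by lia. ring.
  - rewrite lower_upper, lower_upper by (unfold upper; lia). unfold upper. ring.
  - rewrite lower_lower, lower_upper by (unfold upper; lia). unfold upper. ring.
Qed.

Lemma word_pos w n : (1 <= n)%Z -> (1 <= word_val w n)%Z.
Proof.
  intros Hn. rewrite word_val_comp by exact Hn.
  destruct w; cbn; repeat (apply lower_pos || apply upper_pos); exact Hn.
Qed.

Ltac strip_wythoff H :=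
  let pos := repeat (apply lower_pos || apply upper_pos); assumption in
  repeat match type of H with
  | lower _ = lower _ => apply lower_inj in H
  | upper _ = upper _ => apply upper_inj in H
  | lower ?x = upper ?y => exfalso; apply (lower_neq_upper x y); [pos | pos | exact H]
  | upper ?x = lower ?y => exfalso; apply (lower_neq_upper y x); [pos | pos | exact (eq_sym H)]
  end.

Lemma word_inj w w' n n' : (1 <= n)%Z -> (1 <= n')%Z ->
  word_val w n = word_val w' n' -> w = w' /\ n = n'.
Proof.
  intros Hn Hn' E. rewrite !word_val_comp in E by assumption.
  destruct w, w'; cbn in E; strip_wythoff E; auto.
Qed.

Lemma word_surj m : (1 <= m)%Z -> exists w n, (1 <= n)%Z /\ m = word_val w n.
Proof.
  intros Hm.
  destruct (lower_or_upper m Hm) as [[k [Hk ->]] | [k [Hk ->]]].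
  2: { exists wB, k. rewrite word_val_comp; auto. }
  destruct (lower_or_upper k Hk) as [[j [Hj ->]] | [j [Hj ->]]];
    destruct (lower_or_upper j Hj) as [[i [Hi ->]] | [i [Hi ->]]];
    [exists wAAA | exists wAAB | exists wABA | exists wABB];
    exists i; rewrite word_val_comp; auto.
Qed.

Definition words_cover (ws : list wythoff_word) (S : Z -> Prop) : Prop :=
  forall m, S m <-> exists w n, In w ws /\ (1 <= n)%Z /\ m = word_val w n.

Lemma words_cover_single i j w :
  (forall n, word_val w n = fib (S i) * lower n + fib i * n - j)%Z ->
  words_cover [w] (inR i j).
Proof.
  intros Hw m. split.
  - intros [n [Hn ->]]. exists w, n. rewrite Hw. simpl; auto.
  - intros [w' [n [[<- | []] [Hn ->]]]]. exists n. rewrite Hw. auto.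
Qed.

Lemma words_cover_pair i j wl wu :
  (forall k, 1 <= k -> fib (S i) * lower (lower k) + fib i * lower k - j = word_val wl k)%Z ->
  (forall k, 1 <= k -> fib (S i) * lower (upper k) + fib i * upper k - j = word_val wu k)%Z ->
  words_cover [wl; wu] (inR i j).
Proof.
  intros Hl Hu m. split.
  - intros [n [Hn ->]]. fold (lower n).
    destruct (lower_or_upper n Hn) as [[k [Hk ->]] | [k [Hk ->]]].
    + exists wl, k. rewrite <- Hl by exact Hk. simpl; auto.
    + exists wu, k. rewrite <- Hu by exact Hk. simpl; auto.
  - intros [w [k [Hw [Hk ->]]]]. simpl in Hw.
    destruct Hw as [<- | [<- | []]].
    + exists (lower k). rewrite <- Hl by exact Hk. split; [apply lower_pos|]; auto.
    + exists (upper k). rewrite <- Hu by exact Hk. split; [apply upper_pos|]; auto.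
Qed.

Definition rij_words (i : nat) (j : Z) : list wythoff_word :=
  match i, j with
  | 1%nat, 0%Z => [wB]
  | 1%nat, 1%Z => [wAAA; wAAB]
  | 2%nat, 0%Z => [wABA; wABB]
  | 2%nat, 2%Z => [wAAA]
  | 3%nat, 1%Z => [wAAB]
  | 3%nat, 2%Z => [wABA]
  | 4%nat, 0%Z => [wABB]
  | _, _ => []
  end.

Lemma rij_words_cover i j : rij_words i j <> [] -> words_cover (rij_words i j) (inR i j).
Proof.
  intros Hij.
  destruct i as [|[|[|[|[|i]]]]]; destruct j as [|[p|[p|p|]|]|p];
    try (exfalso; apply Hij; reflexivity); cbn [rij_words].
  all: first [ apply words_cover_single; intros n; cbn [word_val fib]; unfold affine; ring
             | apply words_cover_pair; intros k Hk; cbn [word_val fib]; unfold affine;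
               rewrite ?lower_lower, ?lower_upper by exact Hk; unfold upper; ring ].
Qed.

Lemma count_occ_flat_map_ge2 {A B : Type} (dec : forall x y : B, {x = y} + {x <> y})
    (f : A -> list B) (L : list A) (d : A) (b : B) k1 k2 :
  (k1 < length L)%nat -> (k2 < length L)%nat -> k1 <> k2 ->
  In b (f (nth k1 L d)) -> In b (f (nth k2 L d)) ->
  (2 <= count_occ dec (flat_map f L) b)%nat.
Proof.
  assert (Hin : forall k L', (k < length L')%nat -> In b (f (nth k L' d)) ->
                  (0 < count_occ dec (flat_map f L') b)%nat).
  { intros k L' Hk Hb. apply count_occ_In, in_flat_map. exists (nth k L' d).
    split; [apply nth_In|]; assumption. }
  revert k1 k2. induction L as [|x L IH]; intros [|k1] [|k2]; cbn [length nth flat_map];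
    intros H1 H2 Hne Hb1 Hb2; rewrite ?count_occ_app; try lia.
  - pose proof (proj1 (count_occ_In dec _ _) Hb1). pose proof (Hin k2 L ltac:(lia) Hb2). lia.
  - pose proof (proj1 (count_occ_In dec _ _) Hb2). pose proof (Hin k1 L ltac:(lia) Hb1). lia.
  - pose proof (IH k1 k2 ltac:(lia) ltac:(lia) ltac:(lia) Hb1 Hb2). lia.
Qed.

Definition piece_words (p : piece) : list wythoff_word := rij_words (p_i p) (p_j p).

Definition exact_cover (L : list piece) : Prop :=
  Forall (fun p => piece_words p <> []) L /\
  forall w, count_occ wythoff_word_eq_dec (flat_map piece_words L) w = 1%nat.

Lemma piece_set_words L p m : exact_cover L -> In p L ->
  piece_set p m <-> exists w n, In w (piece_words p) /\ (1 <= n)%Z /\ m = word_val w n.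
Proof.
  intros [Hne _] Hp. apply rij_words_cover.
  exact (proj1 (Forall_forall _ L) Hne p Hp).
Qed.

Lemma partition_of_exact_cover L : exact_cover L -> is_partition L.
Proof.
  intros HL. split; [|split].
  - intros p Hp m Hm. apply (piece_set_words L p m HL Hp) in Hm.
    destruct Hm as [w [n [_ [Hn ->]]]]. apply word_pos, Hn.
  - intros m Hm. destruct (word_surj m Hm) as [w [n [Hn ->]]].
    assert (Hw : In w (flat_map piece_words L)).
    { apply (count_occ_In wythoff_word_eq_dec). rewrite (proj2 HL w). lia. }
    apply in_flat_map in Hw. destruct Hw as [p [Hp Hw]].
    exists p. split; [exact Hp|]. apply (piece_set_words L p _ HL Hp). eauto.
  - intros k1 k2 d m H1 H2 Hne M1 M2.
    apply (piece_set_words L _ m HL (nth_In L d H1)) in M1.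
    apply (piece_set_words L _ m HL (nth_In L d H2)) in M2.
    destruct M1 as [w1 [n1 [Hw1 [Hn1 ->]]]], M2 as [w2 [n2 [Hw2 [Hn2 E]]]].
    destruct (word_inj w1 w2 n1 n2 Hn1 Hn2 E) as [<- _].
    pose proof (count_occ_flat_map_ge2 wythoff_word_eq_dec piece_words L d w1 k1 k2
                  H1 H2 Hne Hw1 Hw2) as Hcount.
    rewrite (proj2 HL w1) in Hcount. lia.
Qed.

Definition acts_on_words (f : Z -> Z) (h : wythoff_word -> wythoff_word) : Prop :=
  forall w n, (1 <= n)%Z -> f (word_val w n) = word_val (h w) n.

Definition maps_words (L : list piece) (h : wythoff_word -> wythoff_word) : Prop :=
  forall p w n, In p L -> In w (piece_words p) -> (1 <= n)%Z ->
    piece_val p (word_val w n) = word_val (h w) n.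

Lemma piecewise_of_word_action f h L :
  exact_cover L -> maps_words L h -> acts_on_words f h -> Rij_piecewise f L.
Proof.
  intros HL Hmap Hf. split; [apply partition_of_exact_cover, HL|].
  intros p Hp m Hm. apply (piece_set_words L p m HL Hp) in Hm.
  destruct Hm as [w [n [Hw [Hn ->]]]]. rewrite Hf, Hmap; auto.
Qed.

Lemma acts_on_words_piter f h k : acts_on_words f h -> acts_on_words (piter k f) (Nat.iter k h).
Proof.
  intros Hf w n Hn. unfold piter. induction k as [|k IH]; [reflexivity|].
  rewrite !Nat.iter_succ, IH. apply Hf, Hn.
Qed.

Lemma piter_pos f k n : (forall m, (1 <= m)%Z -> (1 <= f m)%Z) -> (1 <= n)%Z ->
  (1 <= piter k f n)%Z.
Proof.
  intros Hf Hn. unfold piter. induction k as [|k IH]; [exact Hn|].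
  rewrite Nat.iter_succ. apply Hf, IH.
Qed.

Lemma perm_N_of_periodic f k : (forall n, (1 <= n)%Z -> (1 <= f n)%Z) ->
  (forall n, (1 <= n)%Z -> piter (S k) f n = n) -> perm_N f.
Proof.
  intros Hf Hper. split; [exact Hf | split].
  - intros n m Hn Hm E. rewrite <- (Hper n Hn), <- (Hper m Hm).
    unfold piter. rewrite !Nat.iter_succ_r, E. reflexivity.
  - intros m Hm. exists (piter k f m). split; [apply piter_pos; assumption|].
    exact (Hper m Hm).
Qed.

Lemma perm_N_comp f g : perm_N f -> perm_N g -> perm_N (fun n => f (g n)).
Proof.
  intros [Pf [If Sf]] [Pg [Ig Sg]]. split; [|split].
  - intros n Hn. apply Pf, Pg, Hn.
  - intros n m Hn Hm E. apply Ig, If; auto.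
  - intros m Hm. destruct (Sf m Hm) as [k [Hk <-]]. destruct (Sg k Hk) as [n [Hn <-]].
    exists n. auto.
Qed.

Lemma perm_N_piter f k : perm_N f -> perm_N (piter k f).
Proof.
  intros Hf. induction k as [|k IH].
  - split; [|split]; eauto.
  - exact (perm_N_comp f (piter k f) Hf IH).
Qed.

Definition sigma_word (w : wythoff_word) : wythoff_word :=
  match w with
  | wB => wABA
  | wABA => wAAA
  | wAAA => wB
  | wABB => wAAB
  | wAAB => wABB
  end.

Lemma dec_inR_word i j w n : rij_words i j <> [] -> (1 <= n)%Z ->
  dec (inR i j (word_val w n)) =
  if in_dec wythoff_word_eq_dec w (rij_words i j) then true else false.
Proof.
  intros Hij Hn. unfold dec.
  destruct (excluded_middle_informative _) as [H | H]; destruct (in_dec _ _ _) as [Hw | Hw];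
    trivial; exfalso.
  - apply (rij_words_cover i j Hij) in H. destruct H as [w' [n' [Hw' [Hn' E]]]].
    destruct (word_inj w w' n n' Hn Hn' E) as [-> _]. exact (Hw Hw').
  - apply H, (rij_words_cover i j Hij). eauto.
Qed.

Lemma sigma_perm_as_pieces m : sigma_perm m =
  if dec (inR 1 0 m) then piece_val (Piece 1 0 1 1 (-2)) m
  else if dec (inR 3 1 m) then piece_val (Piece 3 1 1 0 2) m
  else if dec (inR 2 2 m) then piece_val (Piece 2 2 1 (-1) 2) m
  else if dec (inR 2 0 m) then piece_val (Piece 2 0 1 (-1) 0) m
  else m.
Proof.
  unfold sigma_perm, piece_val; cbn [p_a p_b p_c].
  repeat match goal with |- context [if ?b then _ else _] => destruct b end;
    trivial; f_equal; lra.
Qed.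

Ltac solve_maps_words :=
  intros p w n Hp Hw Hn; cbn in Hp;
  repeat (destruct Hp as [<- | Hp];
    [ cbn in Hw;
      repeat (destruct Hw as [<- | Hw];
        [ unfold piece_val; cbn [p_a p_b p_c word_val sigma_word Nat.iter];
          apply floor_affine; floor_side | ]);
      contradiction | ]);
  contradiction.

Lemma L1_maps_words : maps_words L1 sigma_word.
Proof. solve_maps_words. Qed.

Lemma L2_maps_words : maps_words L2 (Nat.iter 2 sigma_word).
Proof. solve_maps_words. Qed.

Lemma L3_maps_words : maps_words L3 (Nat.iter 3 sigma_word).
Proof. solve_maps_words. Qed.

Lemma L4_maps_words : maps_words L4 (Nat.iter 4 sigma_word).
Proof. solve_maps_words. Qed.

Lemma L5_maps_words : maps_words L5 (Nat.iter 5 sigma_word).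
Proof. solve_maps_words. Qed.

Ltac solve_exact_cover := split; [repeat constructor; discriminate | intros []; reflexivity].

Lemma L1_exact_cover : exact_cover L1. Proof. solve_exact_cover. Qed.
Lemma L2_exact_cover : exact_cover L2. Proof. solve_exact_cover. Qed.
Lemma L3_exact_cover : exact_cover L3. Proof. solve_exact_cover. Qed.
Lemma L4_exact_cover : exact_cover L4. Proof. solve_exact_cover. Qed.
Lemma L5_exact_cover : exact_cover L5. Proof. solve_exact_cover. Qed.

Lemma sigma_perm_on_words : acts_on_words sigma_perm sigma_word.
Proof.
  intros w n Hn. rewrite sigma_perm_as_pieces, !dec_inR_word by (discriminate || exact Hn).
  destruct w; cbn -[word_val piece_val]; apply L1_maps_words; cbn; auto.
Qed.

Lemma sigma_perm_order_6 n : (1 <= n)%Z -> piter 6 sigma_perm n = n.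
Proof.
  intros Hn. destruct (word_surj n Hn) as [w [k [Hk ->]]].
  rewrite (acts_on_words_piter _ _ 6 sigma_perm_on_words w k Hk). destruct w; reflexivity.
Qed.

Lemma sigma_perm_N : perm_N sigma_perm.
Proof.
  apply (perm_N_of_periodic _ 5); [|exact sigma_perm_order_6].
  intros m Hm. destruct (word_surj m Hm) as [w [n [Hn ->]]].
  rewrite sigma_perm_on_words by exact Hn. apply word_pos, Hn.
Qed.

Lemma sigma_power_not_id k : (1 <= k <= 5)%nat ->
  exists n, (1 <= n)%Z /\ piter k sigma_perm n <> n.
Proof.
  intros Hk.
  assert (Hmove : exists w, Nat.iter k sigma_word w <> w).
  { destruct k as [|[|[|[|[|[|k]]]]]]; try lia;
      [exists wB | exists wB | exists wABB | exists wB | exists wB]; discriminate. }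
  destruct Hmove as [w Hw]. exists (word_val w 1). split; [apply word_pos; lia|].
  rewrite (acts_on_words_piter _ _ k sigma_perm_on_words) by lia.
  intros E. apply word_inj in E; [tauto | lia | lia].
Qed.

Lemma sigma_power_Rij_perm k L : exact_cover L -> maps_words L (Nat.iter k sigma_word) ->
  is_Rij_perm (piter k sigma_perm) /\ Rij_piecewise (piter k sigma_perm) L.
Proof.
  intros HL Hmap.
  assert (Hpw : Rij_piecewise (piter k sigma_perm) L).
  { apply (piecewise_of_word_action _ _ L HL Hmap), acts_on_words_piter, sigma_perm_on_words. }
  split; [split; [apply perm_N_piter, sigma_perm_N | exists L] |]; exact Hpw.
Qed.

Lemma sigma_perm_at w n m m' : (1 <= n)%Z -> word_val w n = m ->
  word_val (sigma_word w) n = m' -> sigma_perm m = m'.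
Proof. intros Hn <- <-. apply sigma_perm_on_words, Hn. Qed.

Lemma sigma_perm_first_values :
  map sigma_perm (1 :: 2 :: 3 :: 4 :: 5 :: 6 :: 7 :: 8 :: 9 :: 10 :: nil)%Z
  = (2 :: 3 :: 1 :: 8 :: 11 :: 5 :: 16 :: 4 :: 7 :: 24 :: nil)%Z.
Proof.
  pose proof phi_bounds.
  assert (lower 1 = 1%Z /\ lower 2 = 3%Z /\ lower 3 = 4%Z /\ lower 4 = 6%Z)
    as (A1 & A2 & A3 & A4) by (repeat split; apply fl_unique; lra).
  cbn [map].
  rewrite (sigma_perm_at wAAA 1 1 2), (sigma_perm_at wB 1 2 3), (sigma_perm_at wABA 1 3 1),
    (sigma_perm_at wAAB 1 4 8), (sigma_perm_at wB 2 5 11), (sigma_perm_at wAAA 2 6 5),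
    (sigma_perm_at wB 3 7 16), (sigma_perm_at wABB 1 8 4), (sigma_perm_at wAAA 3 9 7),
    (sigma_perm_at wB 4 10 24);
    trivial; cbn [word_val sigma_word]; unfold affine; rewrite ?A1, ?A2, ?A3, ?A4; lia.
Qed.

Theorem theorem4p4 :
  Rij_piecewise sigma_perm L1 /\
  is_Rij_perm sigma_perm /\
  (* order 6 *)
  (forall n, (1 <= n)%Z -> piter 6 sigma_perm n = n) /\
  (forall k, (1 <= k <= 5)%nat -> exists n, (1 <= n)%Z /\ piter k sigma_perm n <> n) /\
  (* first values *)
  map sigma_perm (1 :: 2 :: 3 :: 4 :: 5 :: 6 :: 7 :: 8 :: 9 :: 10 :: nil)%Z
    = (2 :: 3 :: 1 :: 8 :: 11 :: 5 :: 16 :: 4 :: 7 :: 24 :: nil)%Z /\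
  (* powers *)
  (is_Rij_perm (piter 2 sigma_perm) /\ Rij_piecewise (piter 2 sigma_perm) L2) /\
  (is_Rij_perm (piter 3 sigma_perm) /\ Rij_piecewise (piter 3 sigma_perm) L3) /\
  (is_Rij_perm (piter 4 sigma_perm) /\ Rij_piecewise (piter 4 sigma_perm) L4) /\
  (is_Rij_perm (piter 5 sigma_perm) /\ Rij_piecewise (piter 5 sigma_perm) L5) /\
  (* sigma_perm^5 = sigma_perm^{-1} *)
  (forall n, (1 <= n)%Z -> piter 5 sigma_perm (sigma_perm n) = n /\ sigma_perm (piter 5 sigma_perm n) = n).
Proof.
  destruct (sigma_power_Rij_perm 1 L1 L1_exact_cover L1_maps_words) as [Hperm Hpw].
  split; [exact Hpw|]. split; [exact Hperm|].
  split; [exact sigma_perm_order_6|].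
  split; [exact sigma_power_not_id|].
  split; [exact sigma_perm_first_values|].
  split; [exact (sigma_power_Rij_perm 2 L2 L2_exact_cover L2_maps_words)|].
  split; [exact (sigma_power_Rij_perm 3 L3 L3_exact_cover L3_maps_words)|].
  split; [exact (sigma_power_Rij_perm 4 L4 L4_exact_cover L4_maps_words)|].
  split; [exact (sigma_power_Rij_perm 5 L5 L5_exact_cover L5_maps_words)|].
  intros n Hn. split; [unfold piter; rewrite <- Nat.iter_succ_r|]; apply sigma_perm_order_6, Hn.
Qed.
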